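(* Let $(E,C)$ be a finite bipartite separated graph with $\mathcal H(F_\infty,D^\infty)=\{\emptyset,F_\infty^0\}$. Then for every $v\in F_\infty^0$ there is at most one $X\in D^\infty_v$ with $|X|>1$.
   Context: Separated graph $(E,C)$: $E=(E^0,E^1,r,s)$, $C=\bigsqcup_vC_v$ with $C_v$ a partition of $r^{-1}(v)$ into non-empty sets. Finite bipartite: $E$ finite, $E^0=E^{0,0}\sqcup E^{0,1}$, $s(E^1)=E^{0,1}$, $r(E^1)=E^{0,0}$. Write $C_u=\{X^u_1,\dots,X^u_{k_u}\}$. $(E_1,C^1)$: $E_1^{0,0}=E^{0,1}$, $E_1^{0,1}=\{v(x_1,\dots,x_{k_u}):u\in E^{0,0},x_j\in X^u_j\}$, edges $\alpha^{x_i}(x_1,\dots,\widehat{x_i},\dots,x_{k_u})$ with range $s(x_i)$ and source $v(x_1,\dots,x_{k_u})$, $C^1_v=\{X(x):x\in s^{-1}(v)\}$ with $X(x_i)=\{\alpha^{x_i}(x_1,\dots,\widehat{x_i},\dots,x_{k_u}):x_j\in X^u_j,j\ne i\}$. Inductively $(E_{n+1},C^{n+1})=((E_n)_1,(C^n)^1)$, $(E_0,C^0)=(E,C)$, and $(F_\infty,D^\infty)=\bigcup_n(E_n,C^n)$ glued along $E_n^{0,1}=E_{n+1}^{0,0}$ (so $D^\infty_v=C^n_v$ for $v\in E_n^{0,0}$). For a separated graph $(F,D)$, $H\subseteq F^0$ is hereditary if $r(e)\in H\Rightarrow s(e)\in H$, and $D$-saturated if $s(X)\subseteq H$ for some $X\in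 D_v$ implies $v\in H$; $\mathcal H(F,D)$ is the set of hereditary $D$-saturated subsets. *)

From mathcomp Require Import all_boot.
Set Implicit Arguments. Unset Strict Implicit. Unset Printing Implicit Defensive.

(** One "bipartite layer" of a separated graph:
    vertices V0 (= ranges, E^{0,0}) and V1 (= sources, E^{0,1}),
    edges Ed with range rg : Ed -> V0 and source sc : Ed -> V1.
    The separation C is given by an index type Bk of blocks, each block
    b lying over the vertex bv b, and bk e = the block containing e.
    So C_v = { {e | bk e = b} : bv b = v }, a partition of r^{-1}(v)
    (bk_rg); blocks are nonempty when bk is surjective. *)
Record SLayer := mkSLayer {
  V0 : Type; V1 : Type; Ed : Type; Bk : Type;
  rg : Ed -> V0; sc : Ed -> V1; bv : Bk -> V0; bk : Ed -> Bk;
  bk_rg : forall e, bv (bk e) = rg e }.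

(** The construction (E_1, C^1).
    E_1^{0,1}: vertices v(x_1,...,x_{k_u}) : a vertex u in E^{0,0} together
    with a choice of one edge x_X in each block X of C_u. *)
Definition nV1 (L : SLayer) : Type :=
  { u : V0 L & forall b : {b : Bk L | bv b = u}, {e : Ed L | bk e = proj1_sig b} }.

(** Edges alpha^{x_i}(x_1,..,^x_i,..,x_k): a vertex w = v(x_1..x_k) and a block
    index i of C_u; source w, range s(x_i). *)
Definition nEd (L : SLayer) : Type := { w : nV1 L & {b : Bk L | bv b = projT1 w} }.

Definition nchosen (L : SLayer) (a : nEd L) : Ed L :=
  proj1_sig (projT2 (projT1 a) (projT2 a)).

Definition nrg (L : SLayer) (a : nEd L) : V1 L := sc (nchosen a).

(** The blocks of C^1 at y in E_1^{0,0} = E^{0,1} are indexed by the edges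
    x in s^{-1}(y): X(x) = { alpha^{x}(...) }, i.e. the edges a with
    nchosen a = x. *)
Definition next (L : SLayer) : SLayer :=
  @mkSLayer (V1 L) (nV1 L) (nEd L) (Ed L)
    (@nrg L) (fun a => projT1 a) (@sc L) (@nchosen L) (fun a => erefl).

Fixpoint lay (L : SLayer) (n : nat) : SLayer :=
  match n with 0 => L | S m => next (lay L m) end.

(** F_infinity^0 : disjoint union of the E_n^{0,0} (note E_n^{0,1} = E_{n+1}^{0,0}
    definitionally). Edges of F_infinity are the edges of the E_n; D^infty_v
    for v in E_n^{0,0} is C^n_v. *)
Definition FV (L : SLayer) : Type := {n : nat & V0 (lay L n)}.

Definition FVin (L : SLayer) (n : nat) (v : V0 (lay L n)) : FV L :=
  existT (fun m => V0 (lay L m)) n v.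

Definition hereditary (L : SLayer) (H : FV L -> Prop) : Prop :=
  forall n (e : Ed (lay L n)),
    H (FVin (rg e)) -> H (@FVin L n.+1 (sc e)).

Definition saturated (L : SLayer) (H : FV L -> Prop) : Prop :=
  forall n (b : Bk (lay L n)),
    (forall e : Ed (lay L n), bk e = b -> H (@FVin L n.+1 (sc e))) ->
    H (FVin (bv b)).

Definition only_trivial_HS (L : SLayer) : Prop :=
  forall H : FV L -> Prop, hereditary H -> saturated H ->
    (forall v, ~ H v) \/ (forall v, H v).

Definition big_block (L : SLayer) n (b : Bk (lay L n)) : Prop :=
  exists e1 e2 : Ed (lay L n), e1 <> e2 /\ bk e1 = b /\ bk e2 = b.

From Stdlib Require Import Classical ClassicalEpsilon Eqdep_dec PeanoNat.
From mathcomp Require Import all_boot.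
Set Implicit Arguments. Unset Strict Implicit. Unset Printing Implicit Defensive.

(* Suppose the vertex v of level n carries two distinct blocks b1, b2 with
   x1 <> x2 in b1 and y1 <> y2 in b2.  Let S be the set of vertices v(...)
   over v, at level n + 2, that pick neither x1 nor y1; it contains
   v(.., x2, .., y2, ..).  Its hereditary closure H lies in the levels
   >= n + 2, so H is neither empty nor everything.  But H is saturated: if the
   vertex of a block is outside H, so is the source of one of its edges.  For
   a block X(x) at level n + 1, complete v(.., x, ..) so that it also picks x1
   or y1; higher up, complete v(.., x, ..) by edges whose sources are outside
   H, which exist by induction on the level. *)

Definition nonempty_blocks (L : SLayer) : Prop := forall b : Bk L, exists e, bk e = b.

(* [w = v(x_1, ..., x_k)] picks [e] iff [e] is one of the [x_i], i.e. iff
   some edge [alpha^e(...)] of the next layer starts at [w]. *)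
Definition chooses (L : SLayer) (w : nV1 L) (e : Ed L) : Prop :=
  exists a : Ed (next L), bk a = e /\ sc a = w.

Section Choices.
Variable L : SLayer.

Lemma chooses_some (w : nV1 L) (b : Bk L) :
  bv b = projT1 w -> exists2 e, bk e = b & chooses w e.
Proof.
move=> hb; pose a : nEd L := existT _ w (exist _ b hb).
by exists (nchosen a); [exact: (proj2_sig (projT2 w (exist _ b hb))) | exists a].
Qed.

Lemma chooses_unique (w : nV1 L) (e e' : Ed L) :
  chooses w e -> chooses w e' -> bk e = bk e' -> e = e'.
Proof.
move=> [[w1 [b1 h1]] [<- /= e1]] [[w2 [b2 h2]] [<- /= e2]]; subst w1 w2.
rewrite /nchosen /= !(proj2_sig (projT2 w _)) /= => e12; subst b2.
by rewrite (proof_irrelevance _ h1 h2).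
Qed.

Lemma exists_vertex (u : V0 L) (Q : Ed L -> Prop) :
  (forall b, bv b = u -> exists2 e, bk e = b & Q e) ->
  exists2 w : nV1 L, projT1 w = u & forall e, chooses w e -> Q e.
Proof.
move=> hQ.
have pick (b : {b : Bk L | bv b = u}) : {e : Ed L | bk e = sval b /\ Q e}.
  apply: constructive_indefinite_description.
  by case: b => b hb; have [e he Qe] := hQ b hb; exists e.
exists (existT _ u (fun b => exist _ (sval (pick b)) (proj1 (proj2_sig (pick b))))) => //.
move=> e [[w [b hb]] [<- /= hw]]; subst w.
exact: (proj2 (proj2_sig (pick _))).
Qed.

Lemma exists_vertex_choosing (u : V0 L) (P : Ed L -> Prop) :
  nonempty_blocks L ->
  (forall e e', P e -> P e' -> bk e = bk e' -> e = e') ->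
  exists2 w : nV1 L, projT1 w = u & forall e, P e -> bv (bk e) = u -> chooses w e.
Proof.
move=> hne hP.
have [|w hw hQ] := @exists_vertex u (fun e => forall e', P e' -> bk e' = bk e -> e' = e).
  move=> b _; case: (classic (exists2 e, bk e = b & P e)) => [[e he Pe]|nP].
    by exists e => // e' Pe' he'; apply: hP.
  have [e he] := hne b; exists e => // e' Pe' he'.
  by case: nP; exists e'; rewrite ?he'.
exists w => // e Pe he; have [|e' he' ce'] := @chooses_some w (bk e); first by rewrite he hw.
by rewrite (hQ e' ce' e Pe (esym he')).
Qed.

Lemma next_nonempty_blocks : nonempty_blocks L -> nonempty_blocks (next L).
Proof.
move=> hne e.
have [|w _ hw] := @exists_vertex_choosing (rg e) (eq e) hne; first by move=> _ _ <- <-.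
by have [a [he _]] := hw e erefl (bk_rg e); exists a.
Qed.

End Choices.

Lemma lay_nonempty_blocks (L : SLayer) :
  nonempty_blocks L -> forall m, nonempty_blocks (lay L m).
Proof. by move=> hne; elim=> [|m IH] //; exact: next_nonempty_blocks. Qed.

Lemma FVin_inj (L : SLayer) m : injective (@FVin L m).
Proof. by move=> x y; apply: inj_pair2_eq_dec; exact: Nat.eq_dec. Qed.

Inductive descendant (L : SLayer) (k : nat) (S : V0 (lay L k) -> Prop) : FV L -> Prop :=
| descendant_root x : S x -> descendant S (FVin x)
| descendant_sc m (e : Ed (lay L m)) :
    descendant S (FVin (rg e)) -> descendant S (@FVin L m.+1 (sc e)).

Section Descendants.
Variables (L : SLayer) (k : nat) (S : V0 (lay L k) -> Prop).

Lemma descendant_level p : descendant S p -> k <= projT1 p.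
Proof. by elim=> // m e _ /= /leqW. Qed.

Lemma descendant_rootP x : descendant S (@FVin L k x) -> S x.
Proof.
move hp: (FVin x) => p d; case: d hp => [y Sy | m e de] hp.
  by rewrite (FVin_inj hp).
have /= hm := f_equal (@projT1 _ _) hp.
by exfalso; move: (descendant_level de); rewrite /= hm ltnn.
Qed.

Lemma descendant_scP m x : k < m.+1 -> descendant S (@FVin L m.+1 x) ->
  exists2 e : Ed (lay L m), sc e = x & descendant S (FVin (rg e)).
Proof.
move=> km; move hp: (FVin x) => p d; case: d hp => [y Sy | m' e de] hp.
  have /= hm := f_equal (@projT1 _ _) hp.
  by exfalso; move: km; rewrite hm ltnn.
have /= [hm] := f_equal (@projT1 _ _) hp; subst m'.
by exists e => //; rewrite (FVin_inj hp).
Qed.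

End Descendants.

Section Saturation.
Variables (L : SLayer) (k : nat) (S : V0 (lay L k.+1) -> Prop).
Hypothesis hne : nonempty_blocks L.
Hypothesis hS : forall b : Bk (lay L k), exists2 e, bk e = b & ~ S (sc e).

Definition escapes m (b : Bk (lay L m)) : Prop :=
  exists2 e : Ed (lay L m), bk e = b & ~ descendant S (@FVin L m.+1 (sc e)).

Lemma escapes_low m (b : Bk (lay L m)) : m <= k -> escapes b.
Proof.
rewrite leq_eqVlt => /orP[/eqP km | mk]; first subst m.
  by have [e he nS] := hS b; exists e => // /descendant_rootP.
have [e he] := lay_nonempty_blocks hne b; exists e => // /descendant_level /=.
by rewrite ltnS leqNgt mk.
Qed.

Lemma escapes_step m : k <= m ->
  (forall b : Bk (lay L m), ~ descendant S (FVin (bv b)) -> escapes b) ->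
  forall b : Bk (lay L m.+1), ~ descendant S (FVin (bv b)) -> escapes b.
Proof.
move=> km IH b nb.
have nrg : ~ descendant S (FVin (rg b)) := fun d => nb (descendant_sc d).
have [|w hw hQ] := @exists_vertex (lay L m) (rg b)
    (fun e => (bk e = bk b -> e = b) /\ ~ descendant S (@FVin L m.+1 (sc e))).
  move=> b' hb'; case: (classic (b' = bk b)) => [->|nbb']; first by exists b.
  have [|e he ne] := IH b'; first by rewrite hb'.
  by exists e => //; split => // he'; case: nbb'; rewrite -he he'.
have [|e he [a [hae haw]]] := @chooses_some _ w (bk b); first by rewrite hw bk_rg.
have ea : e = b := (hQ e (ex_intro _ a (conj hae haw))).1 he.
exists a; first by rewrite hae ea.
rewrite haw => /descendant_scP [|a' ha' da']; first by rewrite !ltnS.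
exact: (hQ (bk a') (ex_intro _ a' (conj erefl ha'))).2 da'.
Qed.

Lemma escapes_outside m (b : Bk (lay L m)) :
  ~ descendant S (FVin (bv b)) -> escapes b.
Proof.
elim: m b => [|m IH] b nb; first exact: escapes_low.
case: (leqP m.+1 k) => [mk|km]; first exact: escapes_low.
exact: escapes_step IH b nb.
Qed.

Theorem descendant_saturated : saturated (descendant S).
Proof.
move=> m b hall; apply: NNPP => nb.
by have [e he ne] := escapes_outside nb; apply: ne; apply: hall.
Qed.

End Saturation.

Section TwoBigBlocks.
Variables (L : SLayer) (b1 b2 : Bk L) (x1 x2 y1 y2 : Ed L).
Hypotheses (hne : nonempty_blocks L) (b12 : b1 <> b2) (hv : bv b1 = bv b2).
Hypotheses (x12 : x1 <> x2) (hx1 : bk x1 = b1) (hx2 : bk x2 = b1).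
Hypotheses (y12 : y1 <> y2) (hy1 : bk y1 = b2) (hy2 : bk y2 = b2).

Definition avoiding (w : nV1 L) : Prop :=
  projT1 w = bv b1 /\ ~ chooses w x1 /\ ~ chooses w y1.

Lemma exists_avoiding : exists w, avoiding w.
Proof.
have [|w hw cw] := @exists_vertex_choosing L (bv b1) (fun e => e = x2 \/ e = y2) hne.
  by move=> e e' [->|->] [->|->]; rewrite ?hx2 ?hy2 // => h; case: b12.
exists w; split=> //; split=> [cx|cy].
  by apply: x12; apply: (chooses_unique cx (cw x2 _ _)); rewrite ?hx1 ?hx2; auto.
by apply: y12; apply: (chooses_unique cy (cw y2 _ _)); rewrite ?hy1 ?hy2 -?hv; auto.
Qed.

Lemma next_blocks_escape_avoiding (e : Bk (next L)) :
  exists2 a : Ed (next L), bk a = e & ~ avoiding (sc a).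
Proof.
have [z [xy_z hz]] : exists z, (z = x1 \/ z = y1) /\ bk z <> bk e.
  case: (classic (bk e = b1)) => he; [exists y1 | exists x1]; split; auto.
    by rewrite hy1 he => /esym.
  by rewrite hx1 => /esym.
have [|w hw cw] := @exists_vertex_choosing L (rg e) (fun e' => e' = e \/ e' = z) hne.
  by move=> e1 e2 [->|->] [->|->] // h; case: hz; rewrite h.
have [a [hae haw]] := cw e (or_introl erefl) (bk_rg e).
exists a => //; rewrite haw => -[hwv [nx ny]].
have cz : chooses w z.
  apply: cw; first by right.
  by rewrite -hw hwv; case: xy_z => ->; rewrite ?hx1 ?hy1.
by case: xy_z cz => -> c; [apply: nx | apply: ny].
Qed.

End TwoBigBlocks.

Theorem lemma8
  (V00 V01 Ed0 Bk0 : finType)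
  (r : Ed0 -> V00) (s : Ed0 -> V01) (bv0 : Bk0 -> V00) (bk0 : Ed0 -> Bk0)
  (hbk : forall e, bv0 (bk0 e) = r e)
  (hne : forall b, exists e, bk0 e = b) :
  let L := @mkSLayer V00 V01 Ed0 Bk0 r s bv0 bk0 hbk in
  only_trivial_HS L ->
  forall (n : nat) (v : V0 (lay L n)) (b1 b2 : Bk (lay L n)),
    bv b1 = v -> bv b2 = v -> big_block b1 -> big_block b2 -> b1 = b2.
Proof.
move=> L hT n v b1 b2 hb1 hb2 [x1 [x2 [x12 [hx1 hx2]]]] [y1 [y2 [y12 [hy1 hy2]]]].
apply: NNPP => b12.
have hneL : nonempty_blocks (lay L n) := @lay_nonempty_blocks L hne n.
have hv : bv b1 = bv b2 by rewrite hb1 hb2.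
pose S : V0 (lay L n.+2) -> Prop := avoiding b1 x1 y1.
have sat : saturated (descendant S) := descendant_saturated (k := n.+1) (L := L) hne
  (next_blocks_escape_avoiding hneL b12 hv hx1 hy1).
have [w Sw] := exists_avoiding hneL b12 hv x12 hx1 hx2 y12 hy1 hy2.
case: (hT _ (@descendant_sc _ _ S) sat) => [none | all].
  exact: none _ (descendant_root Sw).
by have /= /ltnW := descendant_level (all (FVin v)); rewrite ltnn.
Qed.
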